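(* Let $\mathcal{G}'=(G';T_1',T_2';\theta')\in\mathcal{G}_2^{sym}$ with $\mathcal{G}'\neq\mathcal{K}_1$. Then there exists $\mathcal{G}=(G;T_1,T_2;\theta)\in\mathcal{G}_2^{sym}$ such that $\mathcal{G}'$ is obtained from $\mathcal{G}$ by either a symmetric $2$-tree $0$-extension or a symmetric $2$-tree $1$-extension.
   Context: A multi-graph is finite and loop-free, possibly with parallel edges. A $2$-tree decomposition is $(G;T_1,T_2)$ with $G$ a multi-graph and $T_1,T_2$ spanning trees of $G$ whose edge sets partition $E(G)$. Let $\mathbb{Z}_2=\langle s\rangle$. A $\mathbb{Z}_2$-symmetric multi-graph is a pair $(G,\theta)$ with $\theta:\mathbb{Z}_2\to\mathrm{Aut}(G)$ a non-trivial homomorphism; write $s_\theta=\theta(s)$ and for an edge $e=v_1v_2$, $s_\theta(e)=s_\theta(v_1)s_\theta(v_2)$. A vertex $v$ (edge $e$) is fixed if $s_\theta(v)=v$ ($s_\theta(e)=e$). A symmetric $2$-tree decomposition is $(G;T_1,T_2;\theta)$ where $(G;T_1,T_2)$ is a $2$-tree decomposition, $(G,\theta)$ is $\mathbb{Z}_2$-symmetric and $s_\theta(T_i)=T_i$ for $i=1,2$. $\mathcal{G}_2^{sym}$ denotes the set of symmetric $2$-tree decompositions with no fixed edges, together with $\mathcal{K}_1=(K_1;T_1,T_2;\theta)$ where $K_1$ is a single vertex, the $T_i$ are edgeless and $\theta$ is trivial. For $d\in\{1,2\}$: $(G',\theta')$ is obtained from $(G,\theta)$ by a symmetric $d$-dimensional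 $0$-extension if $V(G')=V(G)\cup\{v,s_{\theta'}(v)\}$ with $v,s_{\theta'}(v)\notin V(G)$ distinct, $s_{\theta'}|_{V(G)}=s_\theta$, and $E(G')=E(G)+\{vv_i,s_{\theta'}(vv_i):i=1,\dots,d\}$ for some not necessarily distinct $v_1,\dots,v_d\in V(G)$; it is obtained by a symmetric $d$-dimensional $1$-extension if the first two conditions hold and there are $v_1,\dots,v_{d+1}\in V(G)$ with $e=v_1v_2\in E(G)$ (otherwise not necessarily distinct) such that $E(G')=E(G)-\{e,s_\theta(e)\}+\{vv_i,s_{\theta'}(vv_i):i=1,\dots,d+1\}$. A symmetric $2$-tree decomposition $(G';T_1',T_2';\theta')$ is obtained from $(G;T_1,T_2;\theta)$ by a symmetric $2$-tree $j$-extension ($j\in\{0,1\}$) if $(G',\theta')$ is obtained from $(G,\theta)$ by a symmetric $2$-dimensional $j$-extension and, for $i=1,2$, $(T_i',\theta')$ is obtained from $(T_i,\theta)$ (with the restricted automorphisms) by a symmetric $1$-dimensional $k_i$-extension with the same new vertices, where $k_i\in\{0,1\}$ and $k_1+k_2=j$. *)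

From mathcomp Require Import all_boot.
Set Implicit Arguments.
Unset Strict Implicit.
Unset Printing Implicit Defensive.

(** A multigraph is given by a
  duplicate-free list of vertices and a MULTISET of edges, each edge being an
  unordered pair of distinct vertices.  An (unordered) edge {u,v} is stored as
  an ordered pair (u,v) or (v,u); [nrm] picks a canonical orientation, and
  multisets of edges are compared with [emeq] (permutation of the normalised
  lists).  Parallel edges = repeated entries. *)

Definition edge := (nat * nat)%type.

Definition nrm (e : edge) : edge :=
  if e.1 <= e.2 then (e.1, e.2) else (e.2, e.1).

Definition emeq (E F : seq edge) : Prop := perm_eq (map nrm E) (map nrm F).

Definition emap (s : nat -> nat) (e : edge) : edge := (s e.1, s e.2).

Definition mgraph (V : seq nat) (E : seq edge) : Prop :=
  uniq V /\ forall e, e \in E -> [/\ e.1 \in V, e.2 \in V & e.1 != e.2].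

Inductive reach (E : seq edge) : nat -> nat -> Prop :=
| reach_refl x : reach E x x
| reach_step x y z : ((x, y) \in E) || ((y, x) \in E) -> reach E y z ->
                     reach E x z.

Definition spanning_tree (V : seq nat) (T : seq edge) : Prop :=
  (forall x y, x \in V -> y \in V -> reach T x y) /\ size T = (size V).-1.

(** A candidate 2-tree decomposition together with the involution s = s_theta
    (only its values on the vertex set matter). *)
Record sym2tree := Sym2Tree {
  sV  : seq nat;
  sE  : seq edge;
  sT1 : seq edge;
  sT2 : seq edge;
  ss  : nat -> nat
}.

Definition two_tree_decomp (G : sym2tree) : Prop :=
  [/\ mgraph (sV G) (sE G),
      spanning_tree (sV G) (sT1 G),
      spanning_tree (sV G) (sT2 G) &
      emeq (sE G) (sT1 G ++ sT2 G)].

(** s is an automorphism of the multigraph (V,E) of order dividing 2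
    (i.e. theta : Z_2 -> Aut(G) is a homomorphism, s = theta(s)) *)
Definition inv_aut (V : seq nat) (E : seq edge) (s : nat -> nat) : Prop :=
  [/\ forall x, x \in V -> s x \in V,
      forall x, x \in V -> s (s x) = x &
      emeq (map (emap s) E) E].

Definition nontrivial_on (V : seq nat) (s : nat -> nat) : Prop :=
  exists2 x, x \in V & s x != x.

Definition sym_two_tree_decomp (G : sym2tree) : Prop :=
  [/\ two_tree_decomp G,
      inv_aut (sV G) (sE G) (ss G),
      nontrivial_on (sV G) (ss G),
      emeq (map (emap (ss G)) (sT1 G)) (sT1 G) &
      emeq (map (emap (ss G)) (sT2 G)) (sT2 G)].

Definition no_fixed_edges (G : sym2tree) : Prop :=
  forall e, e \in sE G -> nrm (emap (ss G) e) != nrm e.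

Definition is_K1 (G : sym2tree) : Prop :=
  exists x, [/\ sV G = [:: x], sE G = [::], sT1 G = [::], sT2 G = [::]
              & ss G x = x].

Definition G2sym (G : sym2tree) : Prop :=
  (sym_two_tree_decomp G /\ no_fixed_edges G) \/ is_K1 G.

Definition new_edges (s' : nat -> nat) (v : nat) (ws : seq nat) : seq edge :=
  flatten [seq [:: (v, w); emap s' (v, w)] | w <- ws].

(** E(G) - {e, s(e)} (multiset difference; if s(e) = e only one copy) *)
Definition minus_pair (s : nat -> nat) (E : seq edge) (e : edge)
    (R : seq edge) : Prop :=
  if nrm (emap s e) == nrm e then emeq E (e :: R)
  else emeq E (e :: emap s e :: R).

Definition sym_ext (d j : nat) (V : seq nat) (E : seq edge) (s : nat -> nat)
    (V' : seq nat) (E' : seq edge) (s' : nat -> nat) : Prop :=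
  exists v,
  [/\ [/\ v \notin V, s' v \notin V & v != s' v],
      perm_eq V' (v :: s' v :: V),
      (forall x, x \in V -> s' x = s x) &
      if j == 0 then
        exists ws : seq nat,
          [/\ size ws = d, all (mem V) ws & emeq E' (E ++ new_edges s' v ws)]
      else
        exists ws : seq nat, exists R : seq edge,
          [/\ size ws = d.+1, all (mem V) ws,
              nrm (nth 0 ws 0, nth 0 ws 1) \in map nrm E,
              minus_pair s E (nth 0 ws 0, nth 0 ws 1) R &
              emeq E' (R ++ new_edges s' v ws)]].

Definition sym_2tree_ext (j : nat) (G G' : sym2tree) : Prop :=
  sym_ext 2 j (sV G) (sE G) (ss G) (sV G') (sE G') (ss G') /\
  exists k1 k2, [/\ k1 <= 1, k2 <= 1, k1 + k2 = j,
    sym_ext 1 k1 (sV G) (sT1 G) (ss G) (sV G') (sT1 G') (ss G') &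
    sym_ext 1 k2 (sV G) (sT2 G) (ss G) (sV G') (sT2 G') (ss G')].

From mathcomp Require Import all_boot zify.
From Stdlib Require Import Classical.
Set Implicit Arguments. Unset Strict Implicit. Unset Printing Implicit Defensive.

(** The edges of [G'] are those of two spanning trees, so the degrees sum to
    [4 (|V| - 1)] and some vertex has degree at most 3.  Since no edge is fixed,
    an edge at a fixed vertex [x] is paired with a different edge at [x], so a
    fixed vertex has degree at least 2 in each tree.  Hence some vertex [v] with
    [s v <> v] has degree 1 in one tree and 1 or 2 in the other.  No edge joins
    [v] and [s v] (it would be fixed), so deleting both vertices, and joining the
    two neighbours [a], [b] of [v] by [a b] and [s(a) s(b)] in the tree where [v]
    has degree 2, leaves two symmetric spanning trees of the remaining vertices;
    [G'] is a symmetric 0- or 1-extension of this smaller decomposition, which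
    is [K_1] when [s] fixes all remaining vertices. *)

(** * Edges and edge multisets *)

Definition mult (E : seq edge) (e : edge) := count (fun f => nrm f == e) E.
Definition inc (x : nat) (f : edge) := (f.1 == x) || (f.2 == x).
Definition deg (T : seq edge) (x : nat) := count (inc x) T.
Definition adjb (E : seq edge) x y := ((x, y) \in E) || ((y, x) \in E).

Lemma nrmC x y : nrm (y, x) = nrm (x, y).
Proof. rewrite /nrm /=; case: ifP; case: ifP => //= H1 H2; f_equal; lia. Qed.

Lemma nrm_eqP f x y : nrm f = nrm (x, y) -> f = (x, y) \/ f = (y, x).
Proof. by case: f => a b; rewrite /nrm /=; do 2 case: ifP => _; case=> -> ->; auto. Qed.

Lemma nrm_emap s f g : nrm f = nrm g -> nrm (emap s f) = nrm (emap s g).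
Proof. by case: g => a b /nrm_eqP [] ->; rewrite // /emap nrmC. Qed.

Lemma inc_nrm x f : inc x (nrm f) = inc x f.
Proof. by case: f => a b; rewrite /nrm /inc /=; case: ifP => //= _; rewrite orbC. Qed.

Definition other_end v (g : edge) := if g.1 == v then g.2 else g.1.

Lemma edge_other_end v g : inc v g -> g = (v, other_end v g) \/ g = (other_end v g, v).
Proof.
case: g => a b; rewrite /inc /other_end /=.
by case: (eqVneq a v) => [->|_] /=; [left | move=> /eqP ->; right].
Qed.

Lemma other_end_eq v w g : inc v g -> inc w g -> w != v -> other_end v g = w.
Proof.
by case: g => a b; rewrite /inc /other_end /=; case: (eqVneq a v) => [->|av] /=; lia.
Qed.

Lemma inc_other_end v g : inc (other_end v g) g.
Proof. by case: g => a b; rewrite /inc /other_end /=; case: ifP; rewrite eqxx ?orbT. Qed.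

Lemma nrm_other_end v g : inc v g -> nrm g = nrm (v, other_end v g).
Proof. by move/edge_other_end => [] {1}->; rewrite // nrmC. Qed.

Lemma nrm_emap_other_end s v g : inc v g -> nrm (emap s g) = nrm (s v, s (other_end v g)).
Proof. by move/edge_other_end => [] {1}->; rewrite // /emap nrmC. Qed.

Lemma emeqP E F : emeq E F <-> forall e, mult E e = mult F e.
Proof.
rewrite /emeq /mult; split => [/permP H e | H].
  by have := H (pred1 e); rewrite !count_map.
by apply/allP => x _ /=; apply/eqP; have := H x; rewrite !count_map.
Qed.

Lemma mult_cat A B e : mult (A ++ B) e = mult A e + mult B e.
Proof. exact: count_cat. Qed.

Lemma mult_cons f A e : mult (f :: A) e = (nrm f == e) + mult A e.
Proof. by []. Qed.

Lemma emeq_refl E : emeq E E.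
Proof. exact: perm_refl. Qed.

Lemma emeq_sym E F : emeq E F -> emeq F E.
Proof. by rewrite /emeq perm_sym. Qed.

Lemma emeq_trans E F G : emeq E F -> emeq F G -> emeq E G.
Proof. exact: perm_trans. Qed.

Lemma emeq_size E F : emeq E F -> size E = size F.
Proof. by move=> /perm_size; rewrite !size_map. Qed.

Lemma emeq_cat E1 E2 F1 F2 : emeq E1 F1 -> emeq E2 F2 -> emeq (E1 ++ E2) (F1 ++ F2).
Proof. by move=> /emeqP H1 /emeqP H2; apply/emeqP => e; rewrite !mult_cat H1 H2. Qed.

Lemma emeq_catC E F : emeq (E ++ F) (F ++ E).
Proof. by apply/emeqP => e; rewrite !mult_cat addnC. Qed.

Lemma emeq_catACA A B C D : emeq ((A ++ B) ++ (C ++ D)) ((A ++ C) ++ (B ++ D)).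
Proof. by apply/emeqP => e; rewrite !mult_cat addnACA. Qed.

Lemma mem_mult_gt0 E f : f \in E -> 0 < mult E (nrm f).
Proof. by move=> Hf; rewrite /mult -has_count; apply/hasP; exists f. Qed.

Lemma mult_gt0_mem E f :
  0 < mult E (nrm f) -> exists2 g, g \in E & g = f \/ g = (f.2, f.1).
Proof.
by case: f => a b; rewrite /mult -has_count => /hasP [g Hg /eqP /nrm_eqP]; exists g.
Qed.

Lemma mult_filter P E e : (forall f, P (nrm f) = P f) ->
  mult (filter P E) e = if P e then mult E e else 0.
Proof.
move=> HP; rewrite /mult count_filter; elim: E => [|f E IH] /=; first by case: (P e).
rewrite IH; case: eqP => [<-|_]; rewrite ?HP /=; case: (P f) => //=; case: (P e) => //.
Qed.

Lemma deg_emeq E F x : emeq E F -> deg E x = deg F x.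
Proof.
move=> /permP H; have := H (inc x); rewrite !count_map.
by rewrite /deg !(@eq_count _ (preim nrm (inc x)) (inc x)) // => f /=; rewrite inc_nrm.
Qed.

Lemma mult_add_le_deg T x e1 e2 : e1 != e2 -> inc x e1 -> inc x e2 ->
  mult T e1 + mult T e2 <= deg T x.
Proof.
move=> ne i1 i2; elim: T => [|f T IH] //=; rewrite /deg /mult /= -/(deg T x) -!/(mult _ _).
case: (eqVneq (nrm f) e1) => [E1|N1]; case: (eqVneq (nrm f) e2) => [E2|N2] /=.
- by rewrite -E1 -E2 eqxx in ne.
- have -> : inc x f by rewrite -inc_nrm E1.
  by move: IH; lia.
- have -> : inc x f by rewrite -inc_nrm E2.
  by move: IH; lia.
- by case: (inc x f); move: IH; lia.
Qed.

Lemma sumn_ge (V : seq nat) (F : nat -> nat) k :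
  (forall x, x \in V -> k <= F x) -> k * size V <= sumn (map F V).
Proof.
elim: V => [|x V IH] H /=; first by rewrite muln0.
have := H x (mem_head _ _); have := IH (fun y Hy => H y (mem_behead (s := x :: V) Hy)).
by rewrite mulnS; lia.
Qed.

Lemma sumn_mapD (V : seq nat) (F G : nat -> nat) :
  sumn [seq F x + G x | x <- V] = sumn (map F V) + sumn (map G V).
Proof. by rewrite !sumnE !big_map big_split. Qed.

Lemma handshake (V : seq nat) E : mgraph V E -> sumn [seq deg E x | x <- V] = 2 * size E.
Proof.
case=> uV; elim: E => [|e E IH] HE /=; first by elim: (V).
have [H1 H2 H12] := HE e (mem_head _ _).
have -> : [seq deg (e :: E) x | x <- V] =
          [seq ((x == e.1) + (x == e.2)) + deg E x | x <- V].
  apply: eq_map => x; rewrite /deg /= /inc.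
  rewrite ![_ == x]eq_sym.
  case: (eqVneq e.1 x) => [E1|]; case: (eqVneq e.2 x) => [E2|] //=.
  by rewrite E1 E2 eqxx in H12.
rewrite !sumn_mapD !sumn_count !count_uniq_mem // H1 H2.
by rewrite IH => [|f Hf]; [rewrite mulnS | apply: HE; rewrite inE Hf orbT].
Qed.

(** * Connectivity and spanning trees *)

Lemma adjbC E x y : adjb E x y = adjb E y x.
Proof. by rewrite /adjb orbC. Qed.

Lemma reach1 E x y : adjb E x y -> reach E x y.
Proof. by move=> H; apply: (reach_step H); apply: reach_refl. Qed.

Lemma reach_trans E x y z : reach E x y -> reach E y z -> reach E x z.
Proof. by elim=> // a b c H _ IH /IH; apply: reach_step. Qed.

Lemma reach_sym E x y : reach E x y -> reach E y x.
Proof.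
elim=> [a|a b c H _ IH]; first exact: reach_refl.
by apply: (reach_trans IH); apply: reach1; rewrite adjbC.
Qed.

Lemma reach_map E F (f : nat -> nat) :
  (forall x y, (x, y) \in E -> reach F (f x) (f y)) ->
  forall x y, reach E x y -> reach F (f x) (f y).
Proof.
move=> H x y; elim=> [a|a b c /orP[] Hab _ IH]; first exact: reach_refl.
  exact: reach_trans (H _ _ Hab) IH.
exact: reach_trans (reach_sym (H _ _ Hab)) IH.
Qed.

Lemma reach_sub E F x y :
  (forall x y, (x, y) \in E -> reach F x y) -> reach E x y -> reach F x y.
Proof. by move=> H; apply: (@reach_map E F id H). Qed.

Lemma reach_cons e E x y : reach E x y -> reach (e :: E) x y.
Proof. by apply: reach_sub => a b H; apply: reach1; rewrite /adjb !inE H orbT. Qed.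

Lemma adjb_mult E x y : adjb E x y = (0 < mult E (nrm (x, y))).
Proof.
apply/idP/idP => [/orP[] H | /mult_gt0_mem [g Hg [] Eg]].
- exact: mem_mult_gt0.
- by rewrite -nrmC; apply: mem_mult_gt0.
- by rewrite /adjb -Eg Hg.
- by rewrite /adjb -Eg Hg orbT.
Qed.

Lemma reach_emeq E F x y : emeq E F -> reach E x y -> reach F x y.
Proof.
move=> /emeqP H; apply: reach_sub => a b Hab; apply: reach1.
by rewrite adjb_mult -H -adjb_mult /adjb Hab.
Qed.

Lemma reach_deg_gt0 E x y : reach E x y -> x != y -> 0 < deg E x.
Proof.
case=> [a|a b c /orP H _ _]; first by rewrite eqxx.
by rewrite /deg -has_count; case: H => H; apply/hasP; [exists (a, b) | exists (b, a)];
  rewrite // /inc eqxx ?orbT.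
Qed.

Lemma reach_consP p q E x y : reach ((p, q) :: E) x y ->
  reach E x y \/ ((reach E x p \/ reach E x q) /\ (reach E p y \/ reach E q y)).
Proof.
elim=> [a|a b c H _ IH]; first by left; apply: reach_refl.
have [[? ?]|[? ?]|Rab] : [\/ a = p /\ b = q, a = q /\ b = p | reach E a b];
  try subst a b.
- move: H; rewrite /adjb !inE !xpair_eqE.
  case/orP => /orP[/andP[/eqP -> /eqP ->]|H]; [constructor 1|constructor 3|
    constructor 2|constructor 3]; by [| apply: reach1; rewrite /adjb H ?orbT].
- by right; split; [left; apply: reach_refl | case: IH => [|[]]; auto].
- by right; split; [right; apply: reach_refl | case: IH => [|[]]; auto].
case: IH => [H'|[[H'|H'] H'']]; [left | right | right];
  [| split=> //; left | split=> //; right]; exact: reach_trans Rab H'.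
Qed.

Definition comp_reps E (L R : seq nat) : Prop :=
  [/\ uniq R, {subset R <= L},
      forall x, x \in L -> exists2 r, r \in R & reach E x r &
      forall x y, x \in R -> y \in R -> reach E x y -> x = y].

Section AddEdge.

Variables (p q : nat) (E : seq edge) (L R : seq nat).
Hypothesis repsR : comp_reps E L R.

Let RR x y : reach E x y -> reach ((p, q) :: E) x y := @reach_cons _ E x y.

Lemma comp_reps_merge r1 r2 : r1 \in R -> r2 \in R -> r1 != r2 ->
  reach E r1 p -> reach E r2 q -> comp_reps ((p, q) :: E) L (rem r2 R).
Proof.
case: repsR => uR sR cR pR H1 H2 H12 Hr1 Hr2; split.
- exact: rem_uniq.
- by move=> x /mem_rem /sR.
- move=> x /cR [r Hr Hxr]; case: (eqVneq r r2) => [Er | Hne]; last first.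
    by exists r; [rewrite (mem_rem_uniq _ uR) inE Hne | apply: RR].
  exists r1; first by rewrite (mem_rem_uniq _ uR) inE H1 H12.
  rewrite Er in Hxr; apply: (reach_trans (RR Hxr)); apply: (reach_trans (RR Hr2)).
  apply: (reach_trans (reach1 (y := p) _)); first by rewrite /adjb mem_head orbT.
  exact: RR (reach_sym Hr1).
- move=> x y; rewrite !(mem_rem_uniq _ uR) !inE => /andP[nx Hx] /andP[ny Hy].
  case/reach_consP => [|[[Hp|Hq] [Hp'|Hq']]]; first exact: pR.
  + exact: pR (reach_trans Hp Hp').
  + have E1 := pR _ _ Hy H2 (reach_trans (reach_sym Hq') (reach_sym Hr2)).
    by rewrite E1 eqxx in ny.
  + have E1 := pR _ _ Hx H2 (reach_trans Hq (reach_sym Hr2)).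
    by rewrite E1 eqxx in nx.
  + exact: pR (reach_trans Hq Hq').
Qed.

Lemma comp_reps_keep : ~ (exists r1 r2, [/\ r1 \in R, r2 \in R, r1 != r2,
                                           reach E r1 p & reach E r2 q]) ->
  comp_reps ((p, q) :: E) L R.
Proof.
case: repsR => uR sR cR pR Hno; split=> // [x /cR [r Hr Hxr] | x y Hx Hy].
  by exists r => //; apply: RR.
case/reach_consP => [|[[Hp|Hq] [Hp'|Hq']]]; first exact: pR.
- exact: pR (reach_trans Hp Hp').
- case: (eqVneq x y) => // Hxy; exfalso; apply: Hno.
  by exists x, y; split => //; apply: reach_sym.
- case: (eqVneq x y) => // Hxy; exfalso; apply: Hno.
  by exists y, x; split => //; [rewrite eq_sym | apply: reach_sym].
- exact: pR (reach_trans Hq Hq').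
Qed.

End AddEdge.

Lemma component_reps E (L : seq nat) : uniq L ->
  exists2 R, comp_reps E L R & size L <= size E + size R.
Proof.
move=> uL; elim: E => [|[p q] E [R repsR szR]].
  exists L => //; split=> // [x Hx | x y _ _ H]; first by exists x => //; apply: reach_refl.
  by case: H => // a b c; rewrite /adjb.
case: (classic (exists r1 r2, [/\ r1 \in R, r2 \in R, r1 != r2,
                                  reach E r1 p & reach E r2 q])) => [|Hno].
  case=> r1 [r2 [H1 H2 H12 Hr1 Hr2]]; exists (rem r2 R).
    exact: comp_reps_merge H1 H2 H12 Hr1 Hr2.
  rewrite size_rem //=; move: szR; have : 0 < size R by case: (R) H2.
  by lia.
by exists R; [apply: comp_reps_keep | move: szR => /=; lia].
Qed.

Lemma connected_size_le E (L : seq nat) x0 : uniq L -> x0 \in L ->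
  (forall x y, x \in L -> y \in L -> reach E x y) -> size L <= (size E).+1.
Proof.
move=> uL H0 HC; have [R [uR sR _ pR] szR] := component_reps E uL.
suff : size R <= 1 by move: szR; lia.
case: R uR sR pR {szR} => [|r1 [|r2 R]] //= uR sR pR.
have m1 : r1 \in [:: r1, r2 & R] by rewrite mem_head.
have m2 : r2 \in [:: r1, r2 & R] by rewrite !inE eqxx orbT.
by move: uR; rewrite (pR r1 r2 m1 m2 (HC _ _ (sR _ m1) (sR _ m2))) mem_head.
Qed.

Lemma spanning_tree_bridge V T R x y : uniq V -> spanning_tree V T ->
  emeq T ((x, y) :: R) -> x \in V -> ~ reach R x y.
Proof.
move=> uV [Hc Hs] ET Hx Rxy.
have HcR u w : u \in V -> w \in V -> reach R u w.
  move=> Hu Hw; apply: reach_sub (reach_emeq ET (Hc u w Hu Hw)) => p q.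
  by rewrite inE => /orP[/eqP [-> ->] // | H]; apply: reach1; rewrite /adjb H.
have := connected_size_le uV Hx HcR; have := emeq_size ET; rewrite Hs /=.
have : 0 < size V by case: (V) Hx.
by lia.
Qed.

(** * Involutions and symmetric edge sets *)

Record sym_vertices (V : seq nat) (s : nat -> nat) : Prop := SymVertices {
  symv_uniq : uniq V;
  symv_closed : forall x, x \in V -> s x \in V;
  symv_inv : forall x, x \in V -> s (s x) = x }.

Definition nofix_edges (s : nat -> nat) (E : seq edge) : Prop :=
  forall e, e \in E -> nrm (emap s e) != nrm e.

Record sym_edges (V : seq nat) (s : nat -> nat) (T : seq edge) : Prop := SymEdges {
  syme_ends : forall f, f \in T -> [/\ f.1 \in V, f.2 \in V & f.1 != f.2];
  syme_sym : emeq (map (emap s) T) T;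
  syme_nofix : nofix_edges s T }.

Lemma symv_inj V s x y : sym_vertices V s -> x \in V -> y \in V ->
  (s x == s y) = (x == y).
Proof.
move=> [_ _ Hi] Hx Hy; apply/eqP/eqP => [H|->] //.
by rewrite -(Hi x Hx) -(Hi y Hy) H.
Qed.

Lemma inc_emap V s v f : sym_vertices V s -> v \in V -> f.1 \in V -> f.2 \in V ->
  inc (s v) (emap s f) = inc v f.
Proof. by move=> sV Hv H1 H2; rewrite /inc /= !(symv_inj sV). Qed.

Lemma nofix_edges_cat s E F : nofix_edges s E -> nofix_edges s F -> nofix_edges s (E ++ F).
Proof. by move=> NE NF e; rewrite mem_cat => /orP []; [apply: NE | apply: NF]. Qed.

Lemma sym_edges_sub V s E T : sym_vertices V s -> mgraph V E -> nofix_edges s E ->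
  (forall e, mult T e <= mult E e) -> emeq (map (emap s) T) T -> sym_edges V s T.
Proof.
move=> sV [_ HE] NF Hm Hsym; split => // f Hf;
  have /mult_gt0_mem [g Hg [] Eg] := leq_trans (mem_mult_gt0 Hf) (Hm _).
- by have := HE g Hg; rewrite Eg.
- by have [H1 H2 H12] := HE g Hg; rewrite Eg eq_sym /= in H1 H2 H12.
- by have := NF g Hg; rewrite Eg.
- by have := NF g Hg; case: f {Hf} Eg => a b ->; rewrite /emap /= nrmC (nrmC b).
Qed.

Lemma sym_edges_cons2 V s R a b : sym_vertices V s -> sym_edges V s R ->
  a \in V -> b \in V -> a != b -> nrm (emap s (a, b)) != nrm (a, b) ->
  sym_edges V s ((a, b) :: emap s (a, b) :: R).
Proof.
move=> sV sR Ha Hb ab nf; split.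
- move=> f; rewrite !inE => /orP [/eqP -> | /orP [/eqP -> | Hf]];
    last exact: (syme_ends sR Hf).
  + by split.
  + by rewrite /= !(symv_closed sV) // (symv_inj sV).
- apply/emeqP => e; rewrite !map_cons !mult_cons {1 2}/emap /= !(symv_inv sV) //.
  have /emeqP -> := syme_sym sR; rewrite -/(emap s (a, b)).
  by move: (_ == e) (_ == e) (mult R e); lia.
- move=> f; rewrite !inE => /orP [/eqP -> | /orP [/eqP -> | Hf]] //.
  + by rewrite /emap /= !(symv_inv sV) // eq_sym.
  + exact: (syme_nofix sR Hf).
Qed.

Lemma fixed_deg_gt1 V s T x : sym_vertices V s -> sym_edges V s T -> x \in V ->
  s x = x -> 0 < deg T x -> 1 < deg T x.
Proof.
move=> sV sT Hx sx; rewrite /deg -has_count => /hasP [g Hg ig].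
have Eg := nrm_other_end ig; have Es := nrm_emap_other_end s ig; rewrite sx in Es.
have := mult_add_le_deg T (syme_nofix sT Hg) (x := x).
rewrite Es Eg !inc_nrm /inc /= eqxx => /(_ isT isT).
have : 0 < mult T (nrm (x, s (other_end x g))).
  have /emeqP <- := syme_sym sT; rewrite -Es /mult count_map -has_count.
  by apply/hasP; exists g => //=.
have : 0 < mult T (nrm (x, other_end x g)) by rewrite -Eg; apply: mem_mult_gt0.
by rewrite -/(deg T x); move: (mult T _) (mult T _) (deg T x) => p q r; lia.
Qed.

Lemma sym_edges_fixed V s T : (forall x, x \in V -> s x = x) -> sym_edges V s T -> T = [::].
Proof.
move=> fixV; case: T => [|f T] // sT; have [H1 H2 _] := syme_ends sT (mem_head f T).
by have := syme_nofix sT (mem_head f T); rewrite /emap !fixV // -surjective_pairing eqxx.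
Qed.

(** * Deleting a non-fixed vertex and its image *)

Definition vdel (V : seq nat) v w := [seq x <- V | (x != v) && (x != w)].
Definition edel v w (T : seq edge) := [seq f <- T | ~~ inc v f && ~~ inc w f].
Definition nbrs v (T : seq edge) := [seq other_end v f | f <- T & inc v f].

Lemma mem_edel v w T f :
  (f \in edel v w T) = [&& f.1 != v, f.2 != v, f.1 != w, f.2 != w & f \in T].
Proof. by rewrite mem_filter /inc !negb_or -!andbA. Qed.

Lemma emeq_split_inc v w T : (forall f, f \in T -> ~~ (inc v f && inc w f)) ->
  emeq T (filter (inc v) T ++ filter (inc w) T ++ edel v w T).
Proof.
elim: T => [|f T IH] Hvw //.
have /emeqP IHe := IH (fun g Hg => Hvw g (mem_behead (s := f :: T) Hg)).
apply/emeqP => e; have := Hvw f (mem_head _ _); rewrite mult_cons IHe !mult_cat /=.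
by case: (inc v f); case: (inc w f) => //= _; rewrite ?mult_cons; lia.
Qed.

Lemma new_edges_nbrs s v F : all (inc v) F ->
  emeq (F ++ map (emap s) F) (new_edges s v (map (other_end v) F)).
Proof.
elim: F => [|f F IH] //= /andP [iv /IH /emeqP {}IH]; apply/emeqP => e.
move: (IH e); rewrite /= !mult_cat mult_cons (nrm_other_end iv) (nrm_emap_other_end s iv).
rewrite -/(new_edges _ _ _) [emap s (v, _)]/emap /=.
by move: (mult F e) (mult _ e) (mult (new_edges _ _ _) e); lia.
Qed.

Lemma mem_new_edges s v ws p q : (p, q) \in new_edges s v ws ->
  exists2 w, w \in ws & (p, q) = (v, w) \/ (p, q) = (s v, s w).
Proof.
elim: ws => [|w ws IH] //=; rewrite !inE => /orP [/eqP E | /orP [/eqP E | /IH [u Hu E]]].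
- by exists w; [rewrite mem_head | left].
- by exists w; [rewrite mem_head | right].
- by exists u; [rewrite inE Hu orbT |].
Qed.

Lemma size_new_edges s v ws : size (new_edges s v ws) = 2 * size ws.
Proof. by elim: ws => //= w ws IH; rewrite -/(new_edges _ _ _) IH mulnS. Qed.

Lemma new_edges_cat s v ws1 ws2 :
  new_edges s v (ws1 ++ ws2) = new_edges s v ws1 ++ new_edges s v ws2.
Proof. by rewrite /new_edges map_cat flatten_cat. Qed.

Lemma size_nbrs v T : size (nbrs v T) = deg T v.
Proof. by rewrite size_map size_filter. Qed.

(** The edge set [E(G)] of a symmetric [j]-extension whose result has edges
    [R ++ new_edges s v ws]: for [j = 1] the deleted edge [ws_0 ws_1] and its
    image are put back. *)
Definition ext_base (j : nat) (s : nat -> nat) (ws : seq nat) (R : seq edge) :=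
  if j == 0 then R
  else (nth 0 ws 0, nth 0 ws 1) :: emap s (nth 0 ws 0, nth 0 ws 1) :: R.

Lemma size_ext_base j s ws R : j <= 1 -> size (ext_base j s ws R) = 2 * j + size R.
Proof. by case: j => [|[]]. Qed.

Lemma ext_base_cat j s ws1 ws2 R1 R2 : j <= 1 -> size ws1 = j.+1 ->
  ext_base j s ws1 R1 ++ R2 = ext_base j s (ws1 ++ ws2) (R1 ++ R2).
Proof. by case: j => [|[]] //; case: ws1 => [|a [|b []]]. Qed.

Lemma ext_base_reach j s ws R w : j <= 1 -> size ws = j.+1 -> w \in ws ->
  reach (ext_base j s ws R) (nth 0 ws 0) w /\
  reach (ext_base j s ws R) (s (nth 0 ws 0)) (s w).
Proof.
case: j => [|[]] // _; case: ws => [|a [|b [|]]] //= _; rewrite !inE.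
  by move=> /eqP ->; split; apply: reach_refl.
by case/orP => /eqP ->; split; try apply: reach_refl; apply: reach1;
  rewrite /adjb !inE eqxx ?orbT.
Qed.

Definition ext_vertices (V W : seq nat) (s : nat -> nat) (v : nat) : Prop :=
  [/\ v \notin W, s v \notin W, v != s v & perm_eq V (v :: s v :: W)].

Section NonFixedVertex.

Variables (V : seq nat) (s : nat -> nat) (v : nat).
Hypotheses (sV : sym_vertices V s) (Hv : v \in V) (Hsv : s v != v).

Lemma mem_vdel x : (x \in vdel V v (s v)) = [&& x != v, x != s v & x \in V].
Proof. by rewrite mem_filter andbA. Qed.

Lemma eq_s_v x : x \in V -> (s x == v) = (x == s v).
Proof. by move=> Hx; rewrite -{1}(symv_inv sV Hv) (symv_inj sV Hx (symv_closed sV Hv)). Qed.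

Lemma sym_vertices_vdel : sym_vertices (vdel V v (s v)) s.
Proof.
split; first by rewrite filter_uniq ?(symv_uniq sV).
- move=> x; rewrite !mem_vdel => /and3P [n1 n2 Hx].
  by rewrite eq_s_v // (symv_inj sV) // n1 n2 (symv_closed sV Hx).
- by move=> x; rewrite mem_vdel => /and3P [_ _ Hx]; apply: (symv_inv sV).
Qed.

Lemma perm_vdel : perm_eq V (v :: s v :: vdel V v (s v)).
Proof.
apply: uniq_perm; first exact: (symv_uniq sV).
  rewrite /= !mem_vdel !eqxx /= andbF /= filter_uniq ?(symv_uniq sV) // andbT.
  by rewrite inE negb_or eq_sym Hsv mem_vdel eqxx.
move=> x; rewrite !inE mem_vdel; have := symv_closed sV Hv.
by case: (eqVneq x v) => [->|_] //=; case: (eqVneq x (s v)) => [->|_].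
Qed.

Lemma ext_vertices_vdel : ext_vertices V (vdel V v (s v)) s v.
Proof. by split; rewrite ?mem_vdel ?eqxx ?andbF 1?eq_sym //; apply: perm_vdel. Qed.

Variable T : seq edge.
Hypothesis sT : sym_edges V s T.

(** An edge joining [v] and [s v] would be fixed. *)
Lemma no_edge_v_sv f : f \in T -> ~~ (inc v f && inc (s v) f).
Proof.
move=> Hf; apply/negP => /andP [iv isv]; have := syme_nofix sT Hf.
rewrite (nrm_emap_other_end s iv) (nrm_other_end iv) (other_end_eq iv isv Hsv).
by rewrite (symv_inv sV Hv) nrmC eqxx.
Qed.

Lemma emeq_filter_inc_s : emeq (filter (inc (s v)) T) (map (emap s) (filter (inc v) T)).
Proof.
apply/emeqP => e; rewrite mult_filter; last by move=> f; rewrite inc_nrm.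
have /emeqP <- := syme_sym sT.
rewrite -mult_filter; last by move=> f; rewrite inc_nrm.
rewrite filter_map; congr (mult (map _ _) _); apply: eq_in_filter => f Hf /=.
by have [H1 H2 _] := syme_ends sT Hf; apply: inc_emap sV Hv H1 H2.
Qed.

Lemma star_dec : emeq T (edel v (s v) T ++ new_edges s v (nbrs v T)).
Proof.
apply: emeq_trans (emeq_split_inc no_edge_v_sv) _; rewrite catA.
apply: emeq_trans (emeq_catC _ _) (emeq_cat (emeq_refl _) _).
apply: emeq_trans (emeq_cat (emeq_refl _) emeq_filter_inc_s) _.
by apply: new_edges_nbrs; apply/allP => f; rewrite mem_filter => /andP [].
Qed.

Lemma mem_nbrs w : w \in nbrs v T -> w \in vdel V v (s v).
Proof.
case/mapP => f; rewrite mem_filter => /andP [iv Hf] ->; rewrite mem_vdel.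
have [H1 H2 H12] := syme_ends sT Hf.
have [Eo | _] := eqVneq (other_end v f) v.
  by move: H12; case/edge_other_end: iv => ->; rewrite /= Eo eqxx.
have [Eo | //=] := eqVneq (other_end v f) (s v).
  by have := no_edge_v_sv Hf; rewrite iv -Eo inc_other_end.
by rewrite /other_end; case: ifP.
Qed.

Lemma sym_edges_edel : sym_edges (vdel V v (s v)) s (edel v (s v) T).
Proof.
split.
- move=> f; rewrite mem_edel => /and5P [n1 n2 n3 n4 Hf].
  by have [H1 H2 H12] := syme_ends sT Hf; rewrite !mem_vdel n1 n2 n3 n4 H1 H2.
- apply/emeqP => e.
  have -> : map (emap s) (edel v (s v) T) = edel v (s v) (map (emap s) T).
    rewrite /edel filter_map; congr map; apply: eq_in_filter => f Hf /=.
    have [H1 H2 _] := syme_ends sT Hf.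
    have := inc_emap sV (symv_closed sV Hv) H1 H2; rewrite (symv_inv sV Hv) => ->.
    by rewrite (inc_emap sV Hv H1 H2) andbC.
  rewrite /edel !mult_filter; try by move=> f; rewrite !inc_nrm.
  by have /emeqP -> := syme_sym sT.
- by move=> f; rewrite mem_filter => /andP [_]; apply: (syme_nofix sT).
Qed.

Hypothesis spT : spanning_tree V T.

(** Otherwise the tree would contain the double edge [v a] or the cycle
    [v b s(v) a]. *)
Lemma nbrs_bridge a b : nbrs v T = [:: a; b] ->
  a != b /\ nrm (emap s (a, b)) != nrm (a, b).
Proof.
move=> Ews; have := emeq_trans star_dec (emeq_catC _ _); rewrite Ews => ET.
set R' := (s v, s a) :: (v, b) :: (s v, s b) :: edel v (s v) T.
have Hbr := spanning_tree_bridge (symv_uniq sV) spT (R := R') ET Hv.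
have Rvb : reach R' v b by apply: reach1; rewrite /adjb !inE eqxx ?orbT.
have Rsv x : x \in [:: s a; s b] -> reach R' x (s v).
  by rewrite !inE => /orP [] /eqP ->; apply: reach1; rewrite /adjb !inE eqxx ?orbT.
split; apply/negP.
  by move/eqP => Eab; apply: Hbr; rewrite Eab.
move/eqP/nrm_eqP => Eab; apply: Hbr; apply: (reach_trans Rvb).
have [Ha Hb] : a \in [:: s a; s b] /\ b \in [:: s a; s b].
  by case: Eab => [[-> ->] | [-> ->]]; rewrite !inE !eqxx ?orbT.
exact: reach_trans (Rsv b Hb) (reach_sym (Rsv a Ha)).
Qed.

Lemma sym_edges_ext_base k : k <= 1 -> deg T v = k.+1 ->
  sym_edges (vdel V v (s v)) s (ext_base k s (nbrs v T) (edel v (s v) T)).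
Proof.
case: k => [|[]] // _ dv; first exact: sym_edges_edel.
move: mem_nbrs nbrs_bridge; have := size_nbrs v T; rewrite dv.
case: (nbrs v T) => [|a [|b []]] //= _ Hmem /(_ a b erefl) [ab nf].
apply: sym_edges_cons2 sym_vertices_vdel sym_edges_edel _ _ ab nf;
  by apply: Hmem; rewrite !inE eqxx ?orbT.
Qed.

Lemma spanning_tree_ext_base k : k <= 1 -> deg T v = k.+1 ->
  spanning_tree (vdel V v (s v)) (ext_base k s (nbrs v T) (edel v (s v) T)).
Proof.
move=> k1 dv; have [Hc Hs] := spT.
set ws := nbrs v T; set T0 := ext_base k s ws _; set a := nth 0 ws 0.
have sws : size ws = k.+1 by rewrite size_nbrs.
have Ha : a \in vdel V v (s v) by apply: mem_nbrs; rewrite mem_nth // sws.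
pose rep z := if z == v then a else if z == s v then s a else z.
have rep_id z : z \in vdel V v (s v) -> rep z = z.
  by rewrite mem_vdel /rep => /and3P [/negbTE -> /negbTE -> _].
have Hrep p q : (p, q) \in edel v (s v) T ++ new_edges s v ws -> reach T0 (rep p) (rep q).
  rewrite mem_cat => /orP [Hpq | /mem_new_edges [w Hw [[-> ->] | [-> ->]]]].
  - move: (Hpq); rewrite mem_edel /rep /=.
    move=> /and5P [/negbTE -> /negbTE -> /negbTE -> /negbTE -> _].
    by apply: reach1; rewrite /adjb /T0 /ext_base; case: ifP => _; rewrite ?inE Hpq ?orbT.
  - rewrite {1}/rep eqxx rep_id; last exact: mem_nbrs.
    by case: (ext_base_reach s (edel v (s v) T) k1 sws Hw).
  - have Hsw := symv_closed sym_vertices_vdel (mem_nbrs Hw).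
    rewrite {1}/rep (negbTE Hsv) eqxx rep_id //.
    by case: (ext_base_reach s (edel v (s v) T) k1 sws Hw).
split.
- move=> x y Hx Hy; rewrite -(rep_id x Hx) -(rep_id y Hy).
  apply: (reach_map Hrep); apply: reach_emeq star_dec _.
  by move: Hx Hy; rewrite !mem_vdel => /and3P [_ _ Hx] /and3P [_ _ Hy]; apply: Hc.
- have := emeq_size star_dec; have := perm_size perm_vdel.
  by rewrite size_cat size_new_edges size_ext_base // sws Hs /=; lia.
Qed.

End NonFixedVertex.

(** * The reduction *)

Lemma sym_ext_of d j V W E E0 R s v ws : ext_vertices V W s v -> j <= 1 ->
  size ws = d + j -> all (mem W) ws -> nofix_edges s E0 ->
  emeq E0 (ext_base j s ws R) -> emeq E (R ++ new_edges s v ws) ->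
  sym_ext d j W E0 s V E s.
Proof.
move=> [B1 B2 B3 B4] j1 sws Hws NF E0R ER; exists v; split => //.
case: j j1 sws E0R => [|[]] // _ sws E0R; first by exists ws; rewrite addn0 in sws;
  split => //; apply: emeq_trans ER (emeq_cat (emeq_sym E0R) (emeq_refl _)).
set e := (nth 0 ws 0, nth 0 ws 1) in E0R *.
have He : nrm e \in map nrm E0 by rewrite (perm_mem E0R) mem_head.
have nfe : nrm (emap s e) != nrm e.
  by case/mapP: He => f Hf Ef; rewrite Ef (nrm_emap s Ef); apply: NF.
by exists ws, R; rewrite addn1 in sws; split; rewrite // /minus_pair -/e (negbTE nfe).
Qed.

Lemma G2sym_of W T1 T2 s w0 : sym_vertices W s -> w0 \in W ->
  sym_edges W s T1 -> sym_edges W s T2 -> spanning_tree W T1 -> spanning_tree W T2 ->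
  G2sym (Sym2Tree W (T1 ++ T2) T1 T2 s).
Proof.
move=> sW Hw0 sT1 sT2 sp1 sp2.
have [/hasP [x Hx Hsx] | /hasPn fixW] := boolP (has (fun x => s x != x) W).
  left; split; last exact: (nofix_edges_cat (syme_nofix sT1) (syme_nofix sT2)).
  split => //=.
  - split => //=; last exact: emeq_refl.
    split; first exact: (symv_uniq sW).
    move=> e; rewrite mem_cat => /orP [] He;
      [exact: (syme_ends sT1) | exact: (syme_ends sT2)].
  - split; [exact: (symv_closed sW) | exact: (symv_inv sW) |].
    by rewrite map_cat; apply: emeq_cat; [apply: (syme_sym sT1) | apply: (syme_sym sT2)].
  - by exists x.
  - exact: (syme_sym sT1).
  - exact: (syme_sym sT2).
have {}fixW x : x \in W -> s x = x by move=> /fixW /negbNE /eqP.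
have E1 := sym_edges_fixed fixW sT1; have E2 := sym_edges_fixed fixW sT2.
right; case: sp1 => _; rewrite E1 /=; case EW: W Hw0 => [|w [|]] //= Hw _.
by exists w; rewrite /= E2 fixW // EW mem_head.
Qed.

Lemma spanning_tree_deg_gt0 V T x y : spanning_tree V T -> x \in V -> y \in V ->
  x != y -> forall z, z \in V -> 0 < deg T z.
Proof.
move=> [Hc _] Hx Hy xy z Hz; have [-> | zx] := eqVneq z x.
  exact: reach_deg_gt0 (Hc _ _ Hx Hy) xy.
exact: reach_deg_gt0 (Hc _ _ Hz Hx) zx.
Qed.

Lemma exists_low_deg V E T1 T2 s : sym_vertices V s -> mgraph V E ->
  sym_edges V s T1 -> sym_edges V s T2 -> spanning_tree V T1 -> spanning_tree V T2 ->
  emeq E (T1 ++ T2) -> nontrivial_on V s ->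
  exists2 v, v \in V & [/\ s v != v, 0 < deg T1 v, 0 < deg T2 v & deg T1 v + deg T2 v <= 3].
Proof.
move=> sV mgE sT1 sT2 sp1 sp2 ET [x0 Hx0 Hsx0].
have degE x : deg E x = deg T1 x + deg T2 x by rewrite (deg_emeq x ET) /deg count_cat.
have pos T : spanning_tree V T -> forall x, x \in V -> 0 < deg T x.
  by move=> spT; apply: (spanning_tree_deg_gt0 spT (symv_closed sV Hx0) Hx0 Hsx0).
have [/hasP [v Hv /andP [Hsv dv]] | /hasPn low] :=
  boolP (has (fun x => (s x != x) && (deg E x <= 3)) V).
  by exists v => //; rewrite -degE pos ?pos.
have deg4 x : x \in V -> 4 <= deg E x.
  move=> Hx; rewrite degE; have [sx | sx] := eqVneq (s x) x.
    have := fixed_deg_gt1 sV sT1 Hx sx (pos _ sp1 _ Hx).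
    have := fixed_deg_gt1 sV sT2 Hx sx (pos _ sp2 _ Hx); lia.
  by move: (low x Hx); rewrite sx -degE /=; lia.
have := sumn_ge deg4; rewrite handshake // (emeq_size ET) size_cat.
case: sp1 sp2 => _ -> [_ ->]; have : 0 < size V by case: (V) Hx0.
by lia.
Qed.

Definition swap_trees (G : sym2tree) : sym2tree :=
  Sym2Tree (sV G) (sE G) (sT2 G) (sT1 G) (ss G).

Definition reducible (G' : sym2tree) : Prop :=
  exists G, G2sym G /\ (sym_2tree_ext 0 G G' \/ sym_2tree_ext 1 G G').

Lemma G2sym_swap G : G2sym G -> G2sym (swap_trees G).
Proof.
case: G => V E T1 T2 s; rewrite /G2sym /swap_trees /=.
case=> [[[[mgE sp1 sp2 ET] iaut ntr S1 S2] NF] | [x [EV EE ET1 ET2 sx]]];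
  last by right; exists x.
by left; split => //; split => //; split => //; apply: emeq_trans ET (emeq_catC _ _).
Qed.

Lemma sym_2tree_ext_swap j G G' :
  sym_2tree_ext j G G' -> sym_2tree_ext j (swap_trees G) (swap_trees G').
Proof.
by case=> Gext [k1 [k2 [? ? ? ext1 ext2]]]; split => //; exists k2, k1; rewrite addnC.
Qed.

Lemma reducible_swap G' : reducible (swap_trees G') -> reducible G'.
Proof.
case=> G [GG Gext]; exists (swap_trees G); split; first exact: G2sym_swap.
by case: G' Gext => V E T1 T2 s; case=> /sym_2tree_ext_swap; auto.
Qed.

(** The inverse of a symmetric extension at [v], where [v] has degree [k + 1]
    in the first tree. *)
Definition reduce_at (G : sym2tree) (v k : nat) : sym2tree :=
  let: Sym2Tree V _ T1 T2 s := G in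
  let T01 := ext_base k s (nbrs v T1) (edel v (s v) T1) in
  Sym2Tree (vdel V v (s v)) (T01 ++ edel v (s v) T2) T01 (edel v (s v) T2) s.

Section Reduction.

Variables (V : seq nat) (E T1 T2 : seq edge) (s : nat -> nat) (v k : nat).
Hypotheses (sV : sym_vertices V s) (sT1 : sym_edges V s T1) (sT2 : sym_edges V s T2).
Hypotheses (sp1 : spanning_tree V T1) (sp2 : spanning_tree V T2).
Hypotheses (Hv : v \in V) (Hsv : s v != v) (k1 : k <= 1).
Hypotheses (d1 : deg T1 v = k.+1) (d2 : deg T2 v = 1).

Lemma G2sym_reduce_at : G2sym (reduce_at (Sym2Tree V E T1 T2 s) v k).
Proof.
apply: (G2sym_of (w0 := nth 0 (nbrs v T2) 0) (sym_vertices_vdel sV Hv)).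
- by apply: (mem_nbrs sV Hv Hsv sT2); rewrite mem_nth // size_nbrs d2.
- exact: (sym_edges_ext_base sV Hv Hsv sT1 sp1 k1 d1).
- exact: (sym_edges_edel sV Hv sT2).
- exact: (spanning_tree_ext_base sV Hv Hsv sT1 sp1 k1 d1).
- exact: (spanning_tree_ext_base sV Hv Hsv sT2 sp2 (leq0n 1) d2).
Qed.

Hypothesis ET : emeq E (T1 ++ T2).

Lemma sym_2tree_ext_reduce_at :
  sym_2tree_ext k (reduce_at (Sym2Tree V E T1 T2 s) v k) (Sym2Tree V E T1 T2 s).
Proof.
set W := vdel V v (s v); set R1 := edel v (s v) T1; set R2 := edel v (s v) T2.
set ws1 := nbrs v T1; set ws2 := nbrs v T2.
have NF1 := syme_nofix (sym_edges_ext_base sV Hv Hsv sT1 sp1 k1 d1).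
have NF2 := syme_nofix (sym_edges_edel sV Hv sT2).
have xv := ext_vertices_vdel sV Hv Hsv.
have sws1 : size ws1 = k.+1 by rewrite size_nbrs.
have sws2 : size ws2 = 1 by rewrite size_nbrs.
have Hws1 : all (mem W) ws1 by apply/allP => w /(mem_nbrs sV Hv Hsv sT1).
have Hws2 : all (mem W) ws2 by apply/allP => w /(mem_nbrs sV Hv Hsv sT2).
have D1 := star_dec sV Hv Hsv sT1; have D2 := star_dec sV Hv Hsv sT2.
split; last (exists k, 0; split; rewrite ?addn0 //).
- apply: (sym_ext_of (ws := ws1 ++ ws2) (R := R1 ++ R2) xv k1).
  + by rewrite size_cat sws1 sws2 addn1 add2n.
  + by rewrite all_cat Hws1 Hws2.
  + exact: nofix_edges_cat NF1 NF2.
  + by rewrite -ext_base_cat //; apply: emeq_refl.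
  apply: emeq_trans ET _; rewrite new_edges_cat.
  exact: emeq_trans (emeq_cat D1 D2) (emeq_catACA _ _ _ _).
- exact: (sym_ext_of (ws := ws1) (R := R1) xv k1 _ _ NF1 (emeq_refl _) D1).
- exact: (sym_ext_of (ws := ws2) (R := R2) (j := 0) xv _ _ _ NF2 (emeq_refl _) D2).
Qed.

Lemma reducible_at : reducible (Sym2Tree V E T1 T2 s).
Proof.
exists (reduce_at (Sym2Tree V E T1 T2 s) v k); split; first exact: G2sym_reduce_at.
by move: k1 sym_2tree_ext_reduce_at; case: (k) => [|[]] //; auto.
Qed.

End Reduction.

Theorem theorem5p6 (G' : sym2tree) :
  G2sym G' -> ~ is_K1 G' ->
  exists G : sym2tree,
    G2sym G /\ (sym_2tree_ext 0 G G' \/ sym_2tree_ext 1 G G').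
Proof.
case: G' => V E T1 T2 s [[[[mgE sp1 sp2 ET] [Vs Vinv _] ntr S1 S2] NF] | //] _ /=.
have sV : sym_vertices V s := SymVertices (proj1 mgE) Vs Vinv.
have /emeqP mE := ET.
have sT1 : sym_edges V s T1.
  by apply: sym_edges_sub sV mgE NF _ S1 => e; rewrite mE mult_cat leq_addr.
have sT2 : sym_edges V s T2.
  by apply: sym_edges_sub sV mgE NF _ S2 => e; rewrite mE mult_cat leq_addl.
have [v Hv [Hsv d1 d2 d3]] := exists_low_deg sV mgE sT1 sT2 sp1 sp2 ET ntr.
have [D2 | D1] : deg T2 v = 1 \/ deg T1 v = 1 by lia.
  by apply: (reducible_at (v := v) (k := (deg T1 v).-1)) => //; lia.
apply: reducible_swap; apply: (reducible_at (v := v) (k := (deg T2 v).-1)) => //=; try lia.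
exact: emeq_trans ET (emeq_catC _ _).
Qed.
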